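(* Assume there are $N$ pursuers with positions $\mathbf{x}_{P_i}$ and maximal speeds $u_i$, each faster than the evader ($\nu_i:=\nu_E/u_i<1$), and $\mathbf{x}_E(t_0)\neq\mathbf{x}_{P_i}(t_0)$ for all $i$. Let $\mathcal I=\bigcap_{i}\mathcal A_i(t_0)$. Suppose each pursuer $i$ independently uses (after normalizing its speed) the law $\mathbf{v}_{P_i}=u_i\,\mathbf{z}_{P_i}/\|\mathbf{z}_{P_i}\|$, $\mathbf{z}_{P_i}=(R_{\mathcal C_i}-R_{\mathcal A_i})\mathbf{r}_i/\|\mathbf{r}_i\|+\nu_i\mathbf{y}_i$, with parameter $\delta>0$. Then for every admissible evader control, capture by some pursuer occurs in finite time at a point of $\bigcap_i\mathcal C_i$; consequently, for a closed target set $\mathcal T$ with $\mathcal I\cap\mathcal T=\emptyset$, for all sufficiently small $\delta>0$ the pursuers win the Generalized Target Guarding game.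
   Context: Setting: planar simple motion. The evader has position $\mathbf{x}_E$ with $\dot{\mathbf{x}}_E=\mathbf{v}_E$, $\|\mathbf{v}_E\|\le\nu_E$; pursuer $i$ has position $\mathbf{x}_{P_i}$ with $\dot{\mathbf{x}}_{P_i}=\mathbf{v}_{P_i}$, $\|\mathbf{v}_{P_i}\|\le u_i$. Capture occurs at the first time some $\mathbf{x}_{P_i}=\mathbf{x}_E$. For each $i$, with $\nu_i=\nu_E/u_i<1$, set $\alpha_i=1/(1-\nu_i^2)$, $\gamma_i=\nu_i\alpha_i$, $\beta_i=\nu_i^2\alpha_i$, $\mathbf{r}_i=\mathbf{x}_E-\mathbf{x}_{P_i}$; the Apollonius disc $\mathcal A_i(t)$ is the closed disc with center $\mathbf{x}_{\mathcal A_i}(t)=\alpha_i\mathbf{x}_E(t)-\beta_i\mathbf{x}_{P_i}(t)$ and radius $R_{\mathcal A_i}(t)=\gamma_i\|\mathbf{r}_i(t)\|$; $\mathcal C_i$ is the closed disc with center $\mathbf{x}_{\mathcal C_i}=\mathbf{x}_{\mathcal A_i}(t_0)$ and radius $R_{\mathcal C_i}=R_{\mathcal A_i}(t_0)+\delta$; $\mathbf{y}_i=\mathbf{x}_{\mathcal A_i}-\mathbf{x}_{\mathcal C_i}$. Generalized Target Guarding: the evader wins if it reaches a point of $\mathcal T$ no later than capture; the pursuers win if capture occurs strictly before. *)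

From Stdlib Require Import Reals.
Open Scope R_scope.

Definition Pt : Type := (R * R)%type.

Definition padd (p q : Pt) : Pt := (fst p + fst q, snd p + snd q).
Definition psub (p q : Pt) : Pt := (fst p - fst q, snd p - snd q).
Definition pscal (a : R) (p : Pt) : Pt := (a * fst p, a * snd p).
Definition pnorm (p : Pt) : R := sqrt (fst p ^ 2 + snd p ^ 2).
Definition pdist (p q : Pt) : R := pnorm (psub p q).

Definition in_disc (c : Pt) (rad : R) (p : Pt) : Prop := pdist p c <= rad.

Definition closed_plane (T : Pt -> Prop) : Prop :=
  forall p, (forall eps, 0 < eps -> exists q, T q /\ pdist p q < eps) -> T p.

Definition alphaA (nu : R) : R := 1 / (1 - nu ^ 2).
Definition gammaA (nu : R) : R := nu * alphaA nu.
Definition betaA  (nu : R) : R := nu ^ 2 * alphaA nu.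

Definition apo_center (nu : R) (xE xP : Pt) : Pt :=
  psub (pscal (alphaA nu) xE) (pscal (betaA nu) xP).
Definition apo_radius (nu : R) (xE xP : Pt) : R :=
  gammaA nu * pnorm (psub xE xP).

Definition pursuer_law (nu ui delta : R) (xE0 xP0 xE xP : Pt) : Pt :=
  let r := psub xE xP in
  let RA := apo_radius nu xE xP in
  let RC := apo_radius nu xE0 xP0 + delta in
  let y := psub (apo_center nu xE xP) (apo_center nu xE0 xP0) in
  let z := padd (pscal ((RC - RA) / pnorm r) r) (pscal nu y) in
  pscal (ui / pnorm z) z.

Definition no_capture_upto (N : nat) (xE : R -> Pt) (xP : nat -> R -> Pt)
    (t0 t : R) : Prop :=
  forall s, t0 <= s <= t -> forall j, (j < N)%nat -> xP j s <> xE s.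

Definition first_capture (N : nat) (xE : R -> Pt) (xP : nat -> R -> Pt)
    (t0 Tc : R) : Prop :=
  t0 <= Tc /\
  (exists i, (i < N)%nat /\ xP i Tc = xE Tc) /\
  (forall s, t0 <= s < Tc -> forall j, (j < N)%nat -> xP j s <> xE s).

(* admissible evader trajectories: speed at most nuE, i.e. nuE-Lipschitz
   on [t0, +oo) (the trajectories of measurable controls with ||v_E|| <= nuE) *)
Definition evader_admissible (nuE t0 : R) (xE : R -> Pt) : Prop :=
  forall s t, t0 <= s -> t0 <= t -> pdist (xE t) (xE s) <= nuE * Rabs (t - s).

Definition pursuers_follow (N : nat) (u : nat -> R) (nuE delta t0 : R)
    (xE : R -> Pt) (xP : nat -> R -> Pt) : Prop :=
  forall i, (i < N)%nat ->
    (forall t, t0 <= t -> forall eps, 0 < eps -> exists eta, 0 < eta /\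
        forall s, t0 <= s -> Rabs (s - t) < eta -> pdist (xP i s) (xP i t) < eps) /\
    (forall t, t0 < t -> no_capture_upto N xE xP t0 t ->
        let v := pursuer_law (nuE / u i) (u i) delta (xE t0) (xP i t0)
                             (xE t) (xP i t) in
        derivable_pt_lim (fun s => fst (xP i s)) t (fst v) /\
        derivable_pt_lim (fun s => snd (xP i s)) t (snd v)).

Definition in_all_C (N : nat) (u : nat -> R) (nuE delta : R) (xE0 : Pt)
    (xP0 : nat -> Pt) (p : Pt) : Prop :=
  forall i, (i < N)%nat ->
    in_disc (apo_center (nuE / u i) xE0 (xP0 i))
            (apo_radius (nuE / u i) xE0 (xP0 i) + delta) p.

Definition in_I (N : nat) (u : nat -> R) (nuE : R) (xE0 : Pt)
    (xP0 : nat -> Pt) (p : Pt) : Prop :=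
  forall i, (i < N)%nat ->
    in_disc (apo_center (nuE / u i) xE0 (xP0 i))
            (apo_radius (nuE / u i) xE0 (xP0 i)) p.

Definition pursuers_win (N : nat) (Tg : Pt -> Prop) (xE : R -> Pt)
    (xP : nat -> R -> Pt) (t0 : R) : Prop :=
  exists Tc, first_capture N xE xP t0 Tc /\
    forall s, t0 <= s <= Tc -> ~ Tg (xE s).

(* For each pursuer [i] let [y] be the displacement of the centre of the Apollonius
   disc [A_i] from its initial position and [d = R_C - R_A]; the Lyapunov function
   [F = |y|^2 - d^2] equals [- delta^2] at [t0], and [F < 0 < d] means [A_i] lies inside
   [C_i].  Expanding [F] along an Euler step, the pursuer law makes its first-order
   change at most [2 gamma u (|W| - |z|)] against any evader of speed [nu_E], where
   [|W|^2 - |z|^2 = (1 - nu^2) F]; so [F] decreases at a fixed positive rate while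
   [F <= - delta^2 / 2].  As [F >= - R_C^2] while [d > 0], some pursuer captures the
   evader in finite time, and until then the evader, which lies in every [A_i], lies in
   every [C_i].  As [delta -> 0] the intersections of the [C_i] shrink to [I], so by
   compactness they miss a closed target disjoint from [I] once [delta] is small. *)

From Stdlib Require Import Reals Lra Lia Psatz Classical ClassicalEpsilon.
From Coquelicot Require Compactness.
Open Scope R_scope.

(** * Euclidean geometry of the plane *)

Definition dot (p q : Pt) : R := fst p * fst q + snd p * snd q.

Lemma pt_eq (p q : Pt) : fst p = fst q -> snd p = snd q -> p = q.
Proof. destruct p, q; simpl; intros -> ->; reflexivity. Qed.

Lemma pnorm_ge0 p : 0 <= pnorm p.
Proof. apply sqrt_pos. Qed.

Lemma pnorm_sqr p : pnorm p ^ 2 = dot p p.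
Proof.
  unfold pnorm, dot. rewrite <- Rsqr_pow2, Rsqr_sqrt; [ring | nra].
Qed.

Lemma pnorm_le_of_sqr p b : 0 <= b -> dot p p <= b ^ 2 -> pnorm p <= b.
Proof.
  intros Hb Hp. pose proof (pnorm_ge0 p). rewrite <- pnorm_sqr in Hp.
  apply Rsqr_incr_0_var; [unfold Rsqr; nra | exact Hb].
Qed.

Lemma Rabs_dot_le p q : Rabs (dot p q) <= pnorm p * pnorm q.
Proof.
  pose proof (pnorm_ge0 p); pose proof (pnorm_ge0 q).
  rewrite <- (Rabs_pos_eq (pnorm p * pnorm q)) by nra.
  apply Rsqr_le_abs_0. unfold Rsqr.
  replace (pnorm p * pnorm q * (pnorm p * pnorm q))
    with (pnorm p ^ 2 * pnorm q ^ 2) by ring.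
  rewrite !pnorm_sqr. unfold dot.
  pose proof (pow2_ge_0 (fst p * snd q - snd p * fst q)). nra.
Qed.

Lemma dot_le_pnorm p q : dot p q <= pnorm p * pnorm q.
Proof. eapply Rle_trans; [apply Rle_abs | apply Rabs_dot_le]. Qed.

Lemma pnorm_triangle p q : pnorm (padd p q) <= pnorm p + pnorm q.
Proof.
  apply pnorm_le_of_sqr; [pose proof (pnorm_ge0 p); pose proof (pnorm_ge0 q); lra|].
  pose proof (dot_le_pnorm p q). pose proof (pnorm_sqr p); pose proof (pnorm_sqr q).
  unfold dot, padd in *; simpl in *. nra.
Qed.

Lemma pnorm_scal a p : pnorm (pscal a p) = Rabs a * pnorm p.
Proof.
  unfold pnorm, pscal; simpl. rewrite <- sqrt_Rsqr_abs, <- sqrt_mult_alt.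
  - f_equal. unfold Rsqr; ring.
  - apply Rle_0_sqr.
Qed.

Lemma pnorm_opp p : pnorm (pscal (-1) p) = pnorm p.
Proof. rewrite pnorm_scal, Rabs_left by lra; ring. Qed.

Lemma pnorm_le_coords p : pnorm p <= Rabs (fst p) + Rabs (snd p).
Proof.
  pose proof (Rabs_pos (fst p)); pose proof (Rabs_pos (snd p)).
  apply pnorm_le_of_sqr; [lra|]. unfold dot.
  pose proof (Rsqr_abs (fst p)) as E1. pose proof (Rsqr_abs (snd p)) as E2.
  unfold Rsqr in E1, E2. nra.
Qed.

Lemma coords_le_pnorm p : Rabs (fst p) <= pnorm p /\ Rabs (snd p) <= pnorm p.
Proof.
  pose proof (pnorm_ge0 p). pose proof (pnorm_sqr p). unfold dot in *.
  split; rewrite <- (Rabs_pos_eq (pnorm p)) by lra; apply Rsqr_le_abs_0;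
    unfold Rsqr; nra.
Qed.

Lemma pdist_gt0 p q : p <> q -> 0 < pdist p q.
Proof.
  intro Hpq. destruct (Rle_lt_or_eq_dec _ _ (pnorm_ge0 (psub p q))) as [Hlt|E]; [exact Hlt|].
  exfalso; apply Hpq. pose proof (pnorm_sqr (psub p q)) as Hs.
  rewrite <- E in Hs. unfold dot, psub in Hs; simpl in Hs.
  destruct (Rplus_sqr_eq_0 (fst p - fst q) (snd p - snd q)) as [H1 H2].
  { unfold Rsqr. lra. }
  apply pt_eq; lra.
Qed.

Lemma pdist_sym p q : pdist p q = pdist q p.
Proof. unfold pdist, pnorm, psub; simpl. f_equal; ring. Qed.

Lemma pdist_triangle p q w : pdist p w <= pdist p q + pdist q w.
Proof.
  unfold pdist. replace (psub p w) with (padd (psub p q) (psub q w)).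
  - apply pnorm_triangle.
  - apply pt_eq; unfold padd, psub; simpl; ring.
Qed.

Lemma pnorm_sub_le p q : pnorm (psub p q) <= pnorm p + pnorm q.
Proof.
  replace (psub p q) with (padd p (pscal (-1) q)).
  - rewrite <- (pnorm_opp q). apply pnorm_triangle.
  - apply pt_eq; unfold padd, psub, pscal; simpl; ring.
Qed.

Lemma Rabs_pnorm_sub_le p q : Rabs (pnorm p - pnorm q) <= pnorm (psub p q).
Proof.
  assert (Hsplit : forall a b, pnorm a <= pnorm (psub a b) + pnorm b).
  { intros a b. replace a with (padd (psub a b) b) at 1 by
      (apply pt_eq; unfold padd, psub; simpl; ring).
    apply pnorm_triangle. }
  pose proof (Hsplit p q). pose proof (Hsplit q p).
  pose proof (pdist_sym q p). unfold pdist in *. apply Rabs_le; lra.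
Qed.

Lemma pnorm_lincomb_sqr_le al be w h A B dE dP :
  0 <= al -> 0 <= be -> 0 <= w -> 0 <= A -> 0 <= B ->
  pnorm dE <= A * h -> pnorm dP <= B * h ->
  pnorm (psub (pscal al dE) (pscal be dP)) ^ 2 + w * pnorm (psub dE dP) ^ 2
  <= h ^ 2 * ((al * A + be * B) ^ 2 + w * (A + B) ^ 2).
Proof.
  intros Hal Hbe Hw HA HB HdE HdP.
  assert (H1 : pnorm (psub (pscal al dE) (pscal be dP)) <= h * (al * A + be * B)).
  { eapply Rle_trans; [apply pnorm_sub_le|].
    rewrite !pnorm_scal, !Rabs_pos_eq by assumption. nra. }
  assert (H2 : pnorm (psub dE dP) <= h * (A + B))
    by (eapply Rle_trans; [apply pnorm_sub_le | lra]).
  pose proof (pow_incr _ _ 2 (conj (pnorm_ge0 _) H1)) as H1'.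
  pose proof (Rmult_le_compat_l _ _ _ Hw (pow_incr _ _ 2 (conj (pnorm_ge0 _) H2))) as H2'.
  rewrite Rpow_mult_distr in H1', H2'. lra.
Qed.

(** * The Lyapunov function of one pursuer *)

Section ApolloniusConstants.

Variable nu : R.
Hypothesis Hnu : 0 < nu < 1.

Lemma alphaA_gt0 : 0 < alphaA nu.
Proof. unfold alphaA. apply Rdiv_lt_0_compat; nra. Qed.

Lemma gammaA_gt0 : 0 < gammaA nu.
Proof. apply Rmult_lt_0_compat; [lra | exact alphaA_gt0]. Qed.

Lemma betaA_gt0 : 0 < betaA nu.
Proof. apply Rmult_lt_0_compat; [nra | exact alphaA_gt0]. Qed.

Lemma alphaA_sub_betaA : alphaA nu - betaA nu = 1.
Proof. unfold betaA, alphaA. field. nra. Qed.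

Lemma betaA_le_gammaA : betaA nu <= gammaA nu.
Proof.
  pose proof alphaA_gt0. unfold betaA, gammaA.
  apply Rmult_le_compat_r; [lra | nra].
Qed.

End ApolloniusConstants.

Section Lyapunov.

Variables (nu u delta : R) (E0 P0 : Pt).
Hypotheses (Hnu : 0 < nu < 1) (Hu : 0 < u) (Hdelta : 0 < delta).

Definition radiusC : R := apo_radius nu E0 P0 + delta.
Definition center_shift (E P : Pt) : Pt :=
  psub (apo_center nu E P) (apo_center nu E0 P0).
Definition radius_gap (E P : Pt) : R := radiusC - apo_radius nu E P.

(* [lyap E P < 0] together with [0 < radius_gap E P] says that the current
   Apollonius disc lies in the interior of [C]. *)
Definition lyap (E P : Pt) : R :=
  pnorm (center_shift E P) ^ 2 - radius_gap E P ^ 2.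

Lemma radius_gap_le E P : radius_gap E P <= radiusC.
Proof.
  pose proof (gammaA_gt0 nu Hnu). pose proof (pnorm_ge0 (psub E P)).
  unfold radius_gap, apo_radius. nra.
Qed.

Lemma radiusC_gt0 : 0 < radiusC.
Proof.
  pose proof (gammaA_gt0 nu Hnu). pose proof (pnorm_ge0 (psub E0 P0)).
  unfold radiusC, apo_radius. nra.
Qed.

Lemma radius_gap_init : radius_gap E0 P0 = delta.
Proof. unfold radius_gap, radiusC. ring. Qed.

Lemma lyap_init : lyap E0 P0 = - delta ^ 2.
Proof.
  unfold lyap, center_shift. rewrite radius_gap_init.
  replace (psub (apo_center nu E0 P0) (apo_center nu E0 P0)) with (pscal 0 E0)
    by (apply pt_eq; unfold psub, pscal; simpl; ring).
  rewrite pnorm_scal, Rabs_R0. ring.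
Qed.

Lemma lyap_ge E P : 0 < radius_gap E P -> - radiusC ^ 2 <= lyap E P.
Proof.
  intro Hd. pose proof (radius_gap_le E P).
  pose proof (pow2_ge_0 (pnorm (center_shift E P))). unfold lyap. nra.
Qed.

Lemma center_shift_lt_gap E P :
  lyap E P < 0 -> 0 < radius_gap E P -> pnorm (center_shift E P) < radius_gap E P.
Proof.
  unfold lyap. intros HF Hd. pose proof (pnorm_ge0 (center_shift E P)).
  destruct (Rlt_le_dec (pnorm (center_shift E P)) (radius_gap E P)); nra.
Qed.

(* [E - x_C = beta (P - E) + y], and [beta <= gamma]. *)
Lemma in_disc_C_of_lyap E P :
  lyap E P < 0 -> 0 < radius_gap E P -> in_disc (apo_center nu E0 P0) radiusC E.
Proof.
  intros HF Hd. pose proof (center_shift_lt_gap E P HF Hd) as Hy.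
  assert (Hsplit : psub E (apo_center nu E0 P0)
                   = padd (pscal (betaA nu) (psub P E)) (center_shift E P)).
  { pose proof (alphaA_sub_betaA nu Hnu) as Hab.
    apply pt_eq; unfold center_shift, apo_center, padd, psub, pscal; simpl; nra. }
  unfold in_disc, pdist. rewrite Hsplit.
  eapply Rle_trans; [apply pnorm_triangle|].
  rewrite pnorm_scal, Rabs_pos_eq by (apply Rlt_le, betaA_gt0; exact Hnu).
  fold (pdist P E). rewrite pdist_sym.
  pose proof (betaA_le_gammaA nu Hnu). pose proof (pnorm_ge0 (psub E P)).
  unfold radius_gap, apo_radius, pdist in *. nra.
Qed.

Lemma radius_gap_lipschitz E P E' P' :
  Rabs (radius_gap E' P' - radius_gap E P) <= gammaA nu * (pdist E' E + pdist P' P).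
Proof.
  pose proof (gammaA_gt0 nu Hnu) as Hga.
  unfold radius_gap, apo_radius.
  replace (radiusC - gammaA nu * pnorm (psub E' P') - (radiusC - gammaA nu * pnorm (psub E P)))
    with (- (gammaA nu * (pnorm (psub E' P') - pnorm (psub E P)))) by ring.
  rewrite Rabs_Ropp, Rabs_mult, (Rabs_pos_eq (gammaA nu)) by lra.
  apply Rmult_le_compat_l; [lra|].
  eapply Rle_trans; [apply Rabs_pnorm_sub_le|].
  replace (psub (psub E' P') (psub E P)) with (psub (psub E' E) (psub P' P))
    by (apply pt_eq; unfold psub; simpl; ring).
  apply pnorm_sub_le.
Qed.

Lemma center_shift_lipschitz E P E' P' :
  Rabs (pnorm (center_shift E' P') - pnorm (center_shift E P))
  <= alphaA nu * pdist E' E + betaA nu * pdist P' P.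
Proof.
  eapply Rle_trans; [apply Rabs_pnorm_sub_le|].
  replace (psub (center_shift E' P') (center_shift E P))
    with (psub (pscal (alphaA nu) (psub E' E)) (pscal (betaA nu) (psub P' P)))
    by (apply pt_eq; unfold center_shift, apo_center, psub, pscal; simpl; ring).
  eapply Rle_trans; [apply pnorm_sub_le|].
  rewrite !pnorm_scal, (Rabs_pos_eq (alphaA nu)), (Rabs_pos_eq (betaA nu)).
  - unfold pdist. lra.
  - apply Rlt_le, betaA_gt0; exact Hnu.
  - apply Rlt_le, alphaA_gt0; exact Hnu.
Qed.

(* [pursuer_dir] is the paper's [z_{P_i}]; [evader_dir] is the evader displacement
   along which [lyap] grows fastest (see [lyap_increment_le]). *)
Definition gain (E P : Pt) : R := radius_gap E P / pnorm (psub E P).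
Definition pursuer_dir (E P : Pt) : Pt :=
  padd (pscal (gain E P) (psub E P)) (pscal nu (center_shift E P)).
Definition evader_dir (E P : Pt) : Pt :=
  padd (center_shift E P) (pscal (nu * gain E P) (psub E P)).

Lemma pursuer_law_eq E P :
  pursuer_law nu u delta E0 P0 E P
  = pscal (u / pnorm (pursuer_dir E P)) (pursuer_dir E P).
Proof. reflexivity. Qed.

Lemma dir_norm_identity E P : 0 < pnorm (psub E P) ->
  pnorm (evader_dir E P) ^ 2 - pnorm (pursuer_dir E P) ^ 2 = (1 - nu ^ 2) * lyap E P.
Proof.
  intro Hr. unfold lyap.
  replace (radius_gap E P) with (gain E P * pnorm (psub E P)) by (unfold gain; field; lra).
  rewrite Rpow_mult_distr, !pnorm_sqr.
  unfold evader_dir, pursuer_dir, dot, padd, pscal, psub. simpl. ring.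
Qed.

Lemma lyap_increment_le E P dE dP : 0 < pnorm (psub E P) ->
  lyap (padd E dE) (padd P dP) - lyap E P <=
  2 * alphaA nu * dot (evader_dir E P) dE - 2 * gammaA nu * dot (pursuer_dir E P) dP
  + pnorm (psub (pscal (alphaA nu) dE) (pscal (betaA nu) dP)) ^ 2
  + gammaA nu * gain E P * pnorm (psub dE dP) ^ 2.
Proof.
  intro Hr.
  set (rho := pnorm (psub E P)) in *.
  set (rho' := pnorm (psub (padd E dE) (padd P dP))).
  set (k := gain E P). set (ga := gammaA nu).
  assert (Hga : 0 < ga) by (apply gammaA_gt0; exact Hnu).
  assert (Hkg : 0 <= k + ga).
  { replace (k + ga) with (radiusC / rho)
      by (unfold k, gain, radius_gap, apo_radius; fold rho ga; field; lra).
    apply Rle_mult_inv_pos; [apply Rlt_le, radiusC_gt0 | exact Hr]. }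
  (* Exact expansion of the square of [R_C - gamma |r|]; its remainder has a sign since
     [gain + gamma = R_C / |r| >= 0]. *)
  assert (Hgap : radius_gap E P ^ 2 - radius_gap (padd E dE) (padd P dP) ^ 2
                 = ga * k * (rho' ^ 2 - rho ^ 2) - ga * (k + ga) * (rho' - rho) ^ 2).
  { replace (radius_gap (padd E dE) (padd P dP)) with (radius_gap E P - ga * (rho' - rho))
      by (unfold radius_gap, apo_radius; fold rho rho' ga; ring).
    replace (radius_gap E P) with (k * rho) by (unfold k, gain; fold rho; field; lra).
    ring. }
  assert (Hrho : rho' ^ 2 - rho ^ 2
                 = 2 * dot (psub E P) (psub dE dP) + dot (psub dE dP) (psub dE dP)).
  { unfold rho, rho'. rewrite !pnorm_sqr. unfold dot, psub, padd; simpl; ring. }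
  assert (Hlin : pnorm (center_shift (padd E dE) (padd P dP)) ^ 2
                 - pnorm (center_shift E P) ^ 2
                 + ga * k * (2 * dot (psub E P) (psub dE dP))
                 = 2 * alphaA nu * dot (evader_dir E P) dE
                   - 2 * ga * dot (pursuer_dir E P) dP
                   + pnorm (psub (pscal (alphaA nu) dE) (pscal (betaA nu) dP)) ^ 2).
  { rewrite !pnorm_sqr. unfold ga, gammaA, betaA, evader_dir, pursuer_dir, center_shift,
      apo_center, dot, padd, psub, pscal; fold k; unfold betaA; simpl. ring. }
  rewrite pnorm_sqr with (p := psub dE dP).
  assert (0 <= ga * (k + ga) * (rho' - rho) ^ 2)
    by (apply Rmult_le_pos; [apply Rmult_le_pos; lra | apply pow2_ge_0]).
  unfold lyap. fold ga. nra.
Qed.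

Lemma pursuer_dir_gt0 E P :
  0 < pnorm (psub E P) -> lyap E P < 0 -> 0 < pnorm (pursuer_dir E P).
Proof.
  intros Hr HF. pose proof (dir_norm_identity E P Hr).
  pose proof (pow2_ge_0 (pnorm (evader_dir E P))). pose proof (pnorm_ge0 (pursuer_dir E P)).
  assert (0 < 1 - nu ^ 2) by nra.
  assert (0 < pnorm (pursuer_dir E P) ^ 2) by nra. nra.
Qed.

Lemma pnorm_pursuer_law E P :
  0 < pnorm (psub E P) -> lyap E P < 0 ->
  pnorm (pursuer_law nu u delta E0 P0 E P) = u /\
  dot (pursuer_dir E P) (pursuer_law nu u delta E0 P0 E P) = u * pnorm (pursuer_dir E P).
Proof.
  intros Hr HF. pose proof (pursuer_dir_gt0 E P Hr HF) as Hz.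
  rewrite pursuer_law_eq, pnorm_scal, Rabs_pos_eq by (apply Rle_mult_inv_pos; lra).
  split; [field; lra|].
  replace (dot (pursuer_dir E P) _) with (u / pnorm (pursuer_dir E P) * pnorm (pursuer_dir E P) ^ 2)
    by (rewrite pnorm_sqr; unfold dot, pscal; simpl; ring).
  field; lra.
Qed.

(* Both directions have norm at most [2 radiusC] since [|y| < d <= radiusC], so the
   identity [|W|^2 - |z|^2 = (1 - nu^2) F] bounds [|W| - |z|] away from zero. *)
Lemma evader_dir_sub_pursuer_dir E P :
  0 < pnorm (psub E P) -> lyap E P <= - delta ^ 2 / 2 -> 0 < radius_gap E P ->
  pnorm (evader_dir E P) - pnorm (pursuer_dir E P)
  <= - (1 - nu ^ 2) * delta ^ 2 / (8 * radiusC).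
Proof.
  intros Hr HF Hd. pose proof radiusC_gt0 as HRC.
  assert (HF0 : lyap E P < 0) by nra.
  pose proof (center_shift_lt_gap E P HF0 Hd) as Hy. pose proof (radius_gap_le E P).
  assert (Hkr : pnorm (pscal (gain E P) (psub E P)) = radius_gap E P).
  { rewrite pnorm_scal, Rabs_pos_eq by (apply Rle_mult_inv_pos; lra).
    unfold gain. field. lra. }
  assert (HW : pnorm (evader_dir E P) <= 2 * radiusC).
  { unfold evader_dir. eapply Rle_trans; [apply pnorm_triangle|].
    replace (pscal (nu * gain E P) (psub E P)) with (pscal nu (pscal (gain E P) (psub E P)))
      by (apply pt_eq; unfold pscal; simpl; ring).
    rewrite pnorm_scal, Hkr, Rabs_pos_eq by lra. nra. }
  assert (Hz : pnorm (pursuer_dir E P) <= 2 * radiusC).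
  { unfold pursuer_dir. eapply Rle_trans; [apply pnorm_triangle|].
    rewrite (pnorm_scal nu), Hkr, Rabs_pos_eq by lra.
    pose proof (pnorm_ge0 (center_shift E P)). nra. }
  pose proof (dir_norm_identity E P Hr) as Hid.
  pose proof (pnorm_ge0 (evader_dir E P)). pose proof (pursuer_dir_gt0 E P Hr HF0).
  assert (Hn2 : 0 < 1 - nu ^ 2) by nra.
  apply (Rmult_le_reg_r (8 * radiusC)); [lra|].
  replace (- (1 - nu ^ 2) * delta ^ 2 / (8 * radiusC) * (8 * radiusC))
    with (- (1 - nu ^ 2) * delta ^ 2) by (field; lra).
  assert (Hlt : pnorm (evader_dir E P) < pnorm (pursuer_dir E P)) by nra.
  nra.
Qed.

Definition decay_rate : R :=
  gammaA nu * u * (1 - nu ^ 2) * delta ^ 2 / (4 * radiusC).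

Lemma decay_rate_gt0 : 0 < decay_rate.
Proof.
  pose proof (gammaA_gt0 nu Hnu). pose proof radiusC_gt0.
  assert (0 < 1 - nu ^ 2) by nra. assert (0 < delta ^ 2) by nra.
  unfold decay_rate. apply Rdiv_lt_0_compat; [|lra].
  apply Rmult_lt_0_compat; [apply Rmult_lt_0_compat; [apply Rmult_lt_0_compat|]|]; lra.
Qed.

(* First-order part of an Euler step of length [h]; [e] is the deviation of the
   pursuer's mean velocity from the law. *)
Lemma lyap_step_first_order E P h dE e :
  0 < pnorm (psub E P) -> lyap E P <= - delta ^ 2 / 2 -> 0 < radius_gap E P ->
  0 < h -> pnorm dE <= nu * u * h ->
  2 * alphaA nu * dot (evader_dir E P) dE
  - 2 * gammaA nu * dot (pursuer_dir E P) (pscal h (padd (pursuer_law nu u delta E0 P0 E P) e))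
  <= - decay_rate * h + 2 * gammaA nu * pnorm (pursuer_dir E P) * h * pnorm e.
Proof.
  intros Hr HF Hd Hh HdE.
  assert (HF0 : lyap E P < 0) by nra.
  pose proof (gammaA_gt0 nu Hnu) as Hga. pose proof (alphaA_gt0 nu Hnu).
  set (z := pursuer_dir E P). set (W := evader_dir E P).
  destruct (pnorm_pursuer_law E P Hr HF0) as [_ Hzv]. fold z in Hzv.
  pose proof (evader_dir_sub_pursuer_dir E P Hr HF Hd) as HWz. fold z W in HWz.
  assert (HWE : dot W dE <= pnorm W * (nu * u * h)).
  { eapply Rle_trans; [apply dot_le_pnorm|].
    apply Rmult_le_compat_l; [apply pnorm_ge0 | exact HdE]. }
  assert (Hze : - dot z e <= pnorm z * pnorm e).
  { pose proof (Rabs_dot_le z e). pose proof (Rle_abs (- dot z e)).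
    rewrite Rabs_Ropp in *. lra. }
  replace (dot z (pscal h (padd (pursuer_law nu u delta E0 P0 E P) e)))
    with (h * (u * pnorm z + dot z e)) by (rewrite <- Hzv; unfold dot, padd, pscal; simpl; ring).
  replace (- decay_rate * h)
    with (2 * gammaA nu * u * h * (- (1 - nu ^ 2) * delta ^ 2 / (8 * radiusC)))
    by (unfold decay_rate; pose proof radiusC_gt0; field; lra).
  assert (Hp1 : 0 <= 2 * gammaA nu * u * h) by (apply Rmult_le_pos; [apply Rmult_le_pos|]; lra).
  assert (Hp2 : 0 <= 2 * gammaA nu * h) by (apply Rmult_le_pos; lra).
  pose proof (Rmult_le_compat_l _ _ _ Hp1 HWz).
  pose proof (Rmult_le_compat_l (2 * alphaA nu) _ _ ltac:(lra) HWE).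
  pose proof (Rmult_le_compat_l _ _ _ Hp2 Hze).
  unfold gammaA in *. nra.
Qed.

Lemma lyap_step E P :
  0 < pnorm (psub E P) -> lyap E P <= - delta ^ 2 / 2 -> 0 < radius_gap E P ->
  exists C, 0 <= C /\ forall h dE e, 0 < h -> pnorm dE <= nu * u * h -> pnorm e <= 1 ->
    lyap (padd E dE) (padd P (pscal h (padd (pursuer_law nu u delta E0 P0 E P) e)))
    <= lyap E P - decay_rate * h + C * h * (pnorm e + h).
Proof.
  intros Hr HF Hd.
  assert (HF0 : lyap E P < 0) by nra.
  set (v := pursuer_law nu u delta E0 P0 E P).
  pose proof (alphaA_gt0 nu Hnu). pose proof (betaA_gt0 nu Hnu). pose proof (gammaA_gt0 nu Hnu).
  set (z := pursuer_dir E P). set (al := alphaA nu) in *. set (be := betaA nu) in *.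
  set (ga := gammaA nu) in *. set (k := gain E P).
  assert (Hgk : 0 <= ga * k) by (apply Rmult_le_pos; [lra | apply Rle_mult_inv_pos; lra]).
  destruct (pnorm_pursuer_law E P Hr HF0) as [Hv _]. fold v in Hv.
  pose proof (pursuer_dir_gt0 E P Hr HF0) as Hz. fold z in Hz.
  set (K := (al * (nu * u) + be * (u + 1)) ^ 2 + ga * k * (nu * u + (u + 1)) ^ 2).
  assert (HK : 0 <= K)
    by (unfold K; pose proof (pow2_ge_0 (al * (nu * u) + be * (u + 1)));
        pose proof (Rmult_le_pos _ _ Hgk (pow2_ge_0 (nu * u + (u + 1)))); lra).
  exists (2 * ga * pnorm z + K). split; [nra|].
  intros h dE e Hh HdE He.
  assert (HdP : pnorm (pscal h (padd v e)) <= (u + 1) * h).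
  { rewrite pnorm_scal, Rabs_pos_eq by lra. pose proof (pnorm_triangle v e). nra. }
  pose proof (pnorm_lincomb_sqr_le al be (ga * k) h (nu * u) (u + 1) dE _
                ltac:(lra) ltac:(lra) Hgk ltac:(nra) ltac:(lra) HdE HdP) as Hsq.
  pose proof (lyap_step_first_order E P h dE e Hr HF Hd Hh HdE) as Hlin.
  pose proof (lyap_increment_le E P dE (pscal h (padd v e)) Hr) as Hinc.
  fold al be ga k z v K in Hinc, Hlin, Hsq.
  assert (0 <= 2 * ga * pnorm z * h ^ 2)
    by (apply Rmult_le_pos; [apply Rmult_le_pos; lra | apply pow2_ge_0]).
  assert (0 <= K * h * pnorm e)
    by (pose proof (pnorm_ge0 e); apply Rmult_le_pos; [apply Rmult_le_pos|]; lra).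
  lra.
Qed.

End Lyapunov.

(** * Continuity along trajectories *)

Lemma limit1_in_lt_near f D t c :
  limit1_in f D (f t) t -> f t < c ->
  exists eta, 0 < eta /\ forall s, D s -> Rabs (s - t) < eta -> f s < c.
Proof.
  intros Hf Hc. destruct (Hf (c - f t)) as [eta [Heta H]]; [lra|].
  exists eta. split; [exact Heta|]. intros s Ds Hs.
  specialize (H s (conj Ds Hs)). simpl in H. unfold Rdist in H.
  apply Rabs_def2 in H. lra.
Qed.

Lemma limit1_in_le_left f a t c :
  a < t -> limit1_in f (Rle a) (f t) t ->
  (forall s, a <= s < t -> f s <= c) -> f t <= c.
Proof.
  intros Hat Hf Hle. apply Rnot_lt_le. intro Hc.
  destruct (Hf (f t - c)) as [eta [Heta H]]; [lra|].
  set (s := t - Rmin eta (t - a) / 2).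
  assert (Hs : a <= s < t /\ Rabs (s - t) < eta).
  { pose proof (Rmin_l eta (t - a)). pose proof (Rmin_r eta (t - a)).
    assert (0 < Rmin eta (t - a)) by (apply Rmin_glb_lt; lra).
    unfold s. rewrite Rabs_left by lra. lra. }
  destruct Hs as [Hs Hst]. specialize (H s (conj (proj1 Hs) Hst)).
  simpl in H. unfold Rdist in H. apply Rabs_def2 in H.
  specialize (Hle s Hs). lra.
Qed.

Lemma real_induction (a b : R) (P : R -> Prop) :
  a <= b -> P a ->
  (forall t, a < t <= b -> (forall s, a <= s < t -> P s) -> P t) ->
  (forall t, a <= t < b -> (forall s, a <= s <= t -> P s) ->
     exists eta, 0 < eta /\ forall s, t < s < t + eta -> s <= b -> P s) ->
  forall t, a <= t <= b -> P t.
Proof.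
  intros Hab Pa Hclosed Hopen.
  set (S x := a <= x <= b /\ forall s, a <= s <= x -> P s).
  assert (Sa : S a) by (split; [lra | intros s Hs; replace s with a by lra; exact Pa]).
  destruct (completeness S) as [c [Hub Hlub]].
  { exists b. intros x [Hx _]. lra. }
  { exists a. exact Sa. }
  assert (Hac : a <= c) by (apply Hub, Sa).
  assert (Hcb : c <= b) by (apply Hlub; intros x [Hx _]; lra).
  assert (Hbelow : forall s, a <= s < c -> P s).
  { intros s Hs. apply NNPP; intro HPs.
    enough (c <= s) by lra.
    apply Hlub. intros x [Hx HPx]. apply Rnot_lt_le. intro Hsx.
    apply HPs, HPx. lra. }
  assert (Sc : forall s, a <= s <= c -> P s).
  { intros s Hs. destruct (Req_dec s c) as [->|Hsc]; [|apply Hbelow; lra].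
    destruct (Req_dec c a) as [->|Hca]; [exact Pa|].
    apply Hclosed; [lra | exact Hbelow]. }
  enough (c = b) by (intros t Ht; apply Sc; lra).
  apply NNPP; intro Hcb'.
  destruct (Hopen c ltac:(lra) Sc) as [eta [Heta Hnext]].
  pose proof (Rmin_l (c + eta / 2) b). pose proof (Rmin_r (c + eta / 2) b).
  assert (c < Rmin (c + eta / 2) b) by (apply Rmin_glb_lt; lra).
  set (s' := Rmin (c + eta / 2) b) in *.
  enough (s' <= c) by lra.
  apply Hub. split; [lra|]. intros s Hs.
  destruct (Rle_dec s c); [apply Sc; lra | apply Hnext; lra].
Qed.

Definition traj_continuous (t0 : R) (x : R -> Pt) (t : R) : Prop :=
  forall eps, 0 < eps -> exists eta, 0 < eta /\
    forall s, t0 <= s -> Rabs (s - t) < eta -> pdist (x s) (x t) < eps.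

Lemma lipschitz_traj_continuous L t0 (x : R -> Pt) t :
  0 <= L -> (forall s t, t0 <= s -> t0 <= t -> pdist (x t) (x s) <= L * Rabs (t - s)) ->
  t0 <= t -> traj_continuous t0 x t.
Proof.
  intros HL Hx Ht eps Heps. exists (eps / (L + 1)). split; [apply Rdiv_lt_0_compat; lra|].
  intros s Hs Hst. eapply Rle_lt_trans; [apply Hx; assumption|].
  apply Rle_lt_trans with ((L + 1) * Rabs (s - t)); [pose proof (Rabs_pos (s - t)); nra|].
  apply (Rmult_lt_compat_l (L + 1)) in Hst; [|lra].
  replace ((L + 1) * (eps / (L + 1))) with eps in Hst by (field; lra). exact Hst.
Qed.

Lemma limit1_in_of_traj_bound t0 (xE xP : R -> Pt) (g : R -> R) a b t :
  traj_continuous t0 xE t -> traj_continuous t0 xP t -> 0 <= a -> 0 <= b ->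
  (forall s, t0 <= s ->
     Rabs (g s - g t) <= a * pdist (xE s) (xE t) + b * pdist (xP s) (xP t)) ->
  limit1_in g (Rle t0) (g t) t.
Proof.
  intros HE HP Ha Hb Hg eps Heps.
  set (eps' := eps / (a + b + 1)).
  assert (Heps' : 0 < eps') by (apply Rdiv_lt_0_compat; lra).
  destruct (HE eps' Heps') as [eta1 [Heta1 H1]].
  destruct (HP eps' Heps') as [eta2 [Heta2 H2]].
  exists (Rmin eta1 eta2). split; [apply Rmin_glb_lt; assumption|].
  intros s [Hs Hst]. simpl in *. unfold Rdist in *.
  pose proof (Rmin_l eta1 eta2). pose proof (Rmin_r eta1 eta2).
  specialize (H1 s Hs ltac:(lra)). specialize (H2 s Hs ltac:(lra)).
  eapply Rle_lt_trans; [apply Hg, Hs|].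
  apply Rle_lt_trans with ((a + b) * eps'); [nra|].
  unfold eps'. apply (Rmult_lt_reg_r (a + b + 1)); [lra|].
  replace ((a + b) * (eps / (a + b + 1)) * (a + b + 1)) with ((a + b) * eps) by (field; lra).
  nra.
Qed.

Lemma derivable_pt_increment (x : R -> Pt) t v :
  derivable_pt_lim (fun s => fst (x s)) t (fst v) ->
  derivable_pt_lim (fun s => snd (x s)) t (snd v) ->
  forall eps, 0 < eps -> exists eta, 0 < eta /\ forall h, 0 < h < eta ->
    exists e, pnorm e <= eps /\ x (t + h) = padd (x t) (pscal h (padd v e)).
Proof.
  intros D1 D2 eps Heps.
  destruct (D1 (eps / 2)) as [eta1 H1]; [lra|].
  destruct (D2 (eps / 2)) as [eta2 H2]; [lra|].
  exists (Rmin eta1 eta2). split; [apply Rmin_glb_lt; apply cond_pos|].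
  intros h [Hh Hheta]. pose proof (Rmin_l eta1 eta2). pose proof (Rmin_r eta1 eta2).
  assert (Habs : Rabs h = h) by (apply Rabs_pos_eq; lra).
  specialize (H1 h ltac:(lra) ltac:(lra)). specialize (H2 h ltac:(lra) ltac:(lra)).
  exists ((fst (x (t + h)) - fst (x t)) / h - fst v, (snd (x (t + h)) - snd (x t)) / h - snd v).
  split.
  - eapply Rle_trans; [apply pnorm_le_coords|]. simpl. lra.
  - apply pt_eq; unfold padd, pscal; simpl; field; lra.
Qed.

(** * One pursuer along a trajectory *)

Section Trajectory.

Variables (nu u delta t0 : R) (xE xP : R -> Pt).
Hypotheses (Hnu : 0 < nu < 1) (Hu : 0 < u) (Hdelta : 0 < delta).
Hypothesis HE : forall s t, t0 <= s -> t0 <= t -> pdist (xE t) (xE s) <= nu * u * Rabs (t - s).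
Hypothesis HP : forall t, t0 <= t -> traj_continuous t0 xP t.

Let gap s := radius_gap nu delta (xE t0) (xP t0) (xE s) (xP s).
Let F s := lyap nu delta (xE t0) (xP t0) (xE s) (xP s).
Let M := decay_rate nu u delta (xE t0) (xP t0).

Lemma evader_traj_continuous t : t0 <= t -> traj_continuous t0 xE t.
Proof. apply (lipschitz_traj_continuous (nu * u)); [nra | exact HE]. Qed.

Lemma gap_traj_limit t : t0 <= t -> limit1_in gap (Rle t0) (gap t) t.
Proof.
  intro Ht. pose proof (gammaA_gt0 nu Hnu).
  apply (limit1_in_of_traj_bound t0 xE xP gap (gammaA nu) (gammaA nu));
    [apply evader_traj_continuous | apply HP | lra | lra | ]; try exact Ht.
  intros s Hs. rewrite <- Rmult_plus_distr_l. apply radius_gap_lipschitz, Hnu.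
Qed.

Lemma lyap_traj_limit t : t0 <= t -> limit1_in F (Rle t0) (F t) t.
Proof.
  intro Ht.
  set (ny s := pnorm (center_shift nu (xE t0) (xP t0) (xE s) (xP s))).
  assert (Hny : limit1_in ny (Rle t0) (ny t) t).
  { pose proof (alphaA_gt0 nu Hnu). pose proof (betaA_gt0 nu Hnu).
    apply (limit1_in_of_traj_bound t0 xE xP ny (alphaA nu) (betaA nu));
      [apply evader_traj_continuous | apply HP | lra | lra | ]; try exact Ht.
    intros s Hs. apply center_shift_lipschitz, Hnu. }
  pose proof (limit_minus _ _ _ _ _ _ (limit_mul _ _ _ _ _ _ Hny Hny)
                (limit_mul _ _ _ _ _ _ (gap_traj_limit t Ht) (gap_traj_limit t Ht))) as Hlim.
  replace (F t) with (ny t * ny t - gap t * gap t)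
    by (unfold F, lyap; fold (ny t) (gap t); ring).
  eapply limit1_ext; [|exact Hlim].
  intros s _. unfold F, lyap. fold (ny s) (gap s). ring.
Qed.

Lemma lyap_traj_decrease t :
  t0 <= t -> xP t <> xE t -> F t <= - delta ^ 2 / 2 -> 0 < gap t ->
  let v := pursuer_law nu u delta (xE t0) (xP t0) (xE t) (xP t) in
  derivable_pt_lim (fun s => fst (xP s)) t (fst v) ->
  derivable_pt_lim (fun s => snd (xP s)) t (snd v) ->
  exists eta, 0 < eta /\ forall s, t < s < t + eta -> F s <= F t - M / 2 * (s - t).
Proof.
  intros Ht Hcap HF Hgap v D1 D2.
  assert (Hr : 0 < pnorm (psub (xE t) (xP t))) by (apply pdist_gt0; auto).
  destruct (lyap_step nu u delta (xE t0) (xP t0) Hnu Hu Hdelta (xE t) (xP t) Hr HF Hgap)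
    as [C [HC Hstep]].
  pose proof (decay_rate_gt0 nu u delta (xE t0) (xP t0) Hnu Hu Hdelta) as HM. fold M in HM.
  set (eps := Rmin 1 (M / (4 * (C + 1)))).
  assert (Heps : 0 < eps) by (apply Rmin_glb_lt; [lra | apply Rdiv_lt_0_compat; lra]).
  assert (Heps1 : eps <= 1) by apply Rmin_l.
  assert (Heps2 : eps <= M / (4 * (C + 1))) by apply Rmin_r.
  destruct (derivable_pt_increment xP t v D1 D2 eps Heps) as [eta [Heta Hinc]].
  exists (Rmin eta eps). split; [apply Rmin_glb_lt; assumption|].
  intros s Hs. pose proof (Rmin_l eta eps). pose proof (Rmin_r eta eps).
  set (h := s - t).
  destruct (Hinc h ltac:(unfold h; lra)) as [e [He HPs]].
  replace (t + h) with s in HPs by (unfold h; ring).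
  set (dE := psub (xE s) (xE t)).
  assert (HEs : xE s = padd (xE t) dE) by (apply pt_eq; unfold dE, padd, psub; simpl; ring).
  assert (HdE : pnorm dE <= nu * u * h).
  { pose proof (HE t s Ht ltac:(lra)) as Hl. unfold pdist in Hl. fold dE in Hl.
    rewrite Rabs_pos_eq in Hl by (unfold h; lra). exact Hl. }
  pose proof (Hstep h dE e ltac:(unfold h; lra) HdE ltac:(lra)) as Hlt.
  fold v in Hlt. rewrite <- HEs, <- HPs in Hlt. fold (F s) (F t) M in Hlt.
  assert (Herr : C * (pnorm e + h) <= M / 2).
  { apply Rle_trans with (C * (2 * (M / (4 * (C + 1))))).
    - apply Rmult_le_compat_l; [lra|]. unfold h. lra.
    - apply (Rmult_le_reg_r (C + 1)); [lra|].
      replace (C * (2 * (M / (4 * (C + 1)))) * (C + 1)) with (C * M / 2) by (field; lra).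
      nra. }
  assert (0 < h) by (unfold h; lra).
  assert (C * h * (pnorm e + h) <= M / 2 * h) by nra.
  unfold h in *. lra.
Qed.

Let F_shift s := F s + M / 2 * (s - t0).
Let invariant t := F_shift t <= - delta ^ 2 / 2 /\ 0 < gap t.

Lemma decay_rate_traj_gt0 : 0 < M.
Proof. apply decay_rate_gt0; assumption. Qed.

Lemma F_shift_traj_limit t : t0 <= t -> limit1_in F_shift (Rle t0) (F_shift t) t.
Proof.
  intro Ht. apply limit_plus; [apply lyap_traj_limit, Ht|].
  apply limit_mul; [exact (limit_free (fun _ => M / 2) _ t t) |].
  apply limit_minus; [apply lim_x | exact (limit_free (fun _ => t0) _ t t)].
Qed.

Lemma invariant_init : invariant t0.
Proof.
  unfold invariant, F_shift, F, gap. rewrite lyap_init, radius_gap_init.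
  assert (0 < delta ^ 2) by (apply pow_lt; lra). split; lra.
Qed.

Lemma invariant_left_closed t :
  t0 < t -> (forall s, t0 <= s < t -> invariant s) -> invariant t.
Proof.
  intros Ht IH. pose proof decay_rate_traj_gt0.
  assert (HGt : F_shift t <= - delta ^ 2 / 2).
  { apply (limit1_in_le_left F_shift t0); [lra | apply F_shift_traj_limit; lra |].
    intros s Hs. apply IH, Hs. }
  split; [exact HGt|].
  assert (Hge : - gap t <= 0).
  { apply (limit1_in_le_left (fun s => - gap s) t0); [lra | |].
    - apply limit_Ropp, gap_traj_limit; lra.
    - intros s Hs. pose proof (proj2 (IH s Hs)). lra. }
  (* [radius_gap = 0] would force [lyap >= 0]. *)
  destruct (Req_dec (gap t) 0) as [H0|]; [|lra].
  assert (0 <= F t) by (unfold F, lyap; fold (gap t); rewrite H0; simpl; nra).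
  assert (0 <= M / 2 * (t - t0)) by (apply Rmult_le_pos; lra).
  unfold F_shift in HGt. assert (0 < delta ^ 2) by (apply pow_lt; lra). lra.
Qed.

Lemma invariant_right_open t :
  t0 <= t -> invariant t ->
  (t0 < t -> xP t <> xE t /\
     let v := pursuer_law nu u delta (xE t0) (xP t0) (xE t) (xP t) in
     derivable_pt_lim (fun s => fst (xP s)) t (fst v) /\
     derivable_pt_lim (fun s => snd (xP s)) t (snd v)) ->
  exists eta, 0 < eta /\ forall s, t < s < t + eta -> invariant s.
Proof.
  intros Ht [HGt Hgt] Hflow. pose proof decay_rate_traj_gt0.
  destruct (limit1_in_lt_near _ _ t 0 (limit_Ropp _ _ _ _ (gap_traj_limit t Ht)) ltac:(lra))
    as [eta2 [Heta2 H2]].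
  assert (Hnext : exists eta1, 0 < eta1 /\
            forall s, t < s < t + eta1 -> F_shift s <= - delta ^ 2 / 2).
  { destruct (Req_dec t t0) as [->|Ht0].
    - (* No derivative is available at [t0]; the slack between [lyap = - delta ^ 2]
         and the bound [- delta ^ 2 / 2] is used instead. *)
      assert (HG0 : F_shift t0 < - delta ^ 2 / 2).
      { unfold F_shift, F. rewrite lyap_init. assert (0 < delta ^ 2) by (apply pow_lt; lra). lra. }
      destruct (limit1_in_lt_near _ _ t0 _ (F_shift_traj_limit t0 (Rle_refl t0)) HG0)
        as [eta1 [Heta1 H1]].
      exists eta1. split; [exact Heta1|]. intros s Hs.
      apply Rlt_le, H1; [lra | rewrite Rabs_pos_eq; lra].
    - destruct (Hflow ltac:(lra)) as [Hcap [D1 D2]].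
      assert (HFt : F t <= - delta ^ 2 / 2).
      { assert (0 <= M / 2 * (t - t0)) by (apply Rmult_le_pos; lra). unfold F_shift in HGt. lra. }
      destruct (lyap_traj_decrease t Ht Hcap HFt Hgt D1 D2) as [eta1 [Heta1 H1]].
      exists eta1. split; [exact Heta1|]. intros s Hs.
      specialize (H1 s Hs). unfold F_shift in *. lra. }
  destruct Hnext as [eta1 [Heta1 H1]].
  exists (Rmin eta1 eta2). split; [apply Rmin_glb_lt; assumption|].
  intros s Hs. pose proof (Rmin_l eta1 eta2). pose proof (Rmin_r eta1 eta2).
  split; [apply H1; lra|].
  enough (- gap s < 0) by lra. apply H2; [lra | rewrite Rabs_pos_eq; lra].
Qed.

Lemma lyap_traj_invariant T :
  t0 <= T ->
  (forall t, t0 < t < T ->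
     let v := pursuer_law nu u delta (xE t0) (xP t0) (xE t) (xP t) in
     derivable_pt_lim (fun s => fst (xP s)) t (fst v) /\
     derivable_pt_lim (fun s => snd (xP s)) t (snd v)) ->
  (forall t, t0 <= t < T -> xP t <> xE t) ->
  forall t, t0 <= t <= T -> F t + M / 2 * (t - t0) <= - delta ^ 2 / 2 /\ 0 < gap t.
Proof.
  intros HT HD Hnc.
  apply (real_induction t0 T invariant HT invariant_init
           (fun t Ht => invariant_left_closed t (proj1 Ht))).
  intros t Ht IH.
  destruct (invariant_right_open t (proj1 Ht) (IH t ltac:(lra))) as [eta [Heta Hnext]].
  { intro Ht0. split; [apply Hnc; lra | apply HD; lra]. }
  exists eta. split; [exact Heta|]. intros s Hs _. apply Hnext, Hs.
Qed.

End Trajectory.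

(** * Capture *)

Lemma ex_common_radius N (Q : nat -> R -> Prop) :
  (forall j eta eta', 0 < eta' <= eta -> Q j eta -> Q j eta') ->
  (forall j, (j < N)%nat -> exists eta, 0 < eta /\ Q j eta) ->
  exists eta, 0 < eta /\ forall j, (j < N)%nat -> Q j eta.
Proof.
  intros Hmono. induction N as [|N IH]; intros HQ.
  - exists 1. split; [lra | intros j Hj; inversion Hj].
  - destruct IH as [eta1 [Heta1 H1]]; [intros j Hj; apply HQ; lia|].
    destruct (HQ N ltac:(lia)) as [eta2 [Heta2 H2]].
    assert (0 < Rmin eta1 eta2) by (apply Rmin_glb_lt; assumption).
    exists (Rmin eta1 eta2). split; [assumption|]. intros j Hj.
    destruct (Nat.eq_dec j N) as [->|Hne].
    + apply (Hmono N eta2); [split; [assumption | apply Rmin_r] | exact H2].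
    + apply (Hmono j eta1); [split; [assumption | apply Rmin_l] | apply H1; lia].
Qed.

Lemma traj_apart_near t0 (x y : R -> Pt) t :
  traj_continuous t0 x t -> traj_continuous t0 y t -> x t <> y t ->
  exists eta, 0 < eta /\ forall s, t0 <= s -> Rabs (s - t) < eta -> x s <> y s.
Proof.
  intros Hx Hy Hxy. pose proof (pdist_gt0 _ _ Hxy) as Hq.
  destruct (Hx (pdist (x t) (y t) / 2)) as [eta1 [Heta1 H1]]; [lra|].
  destruct (Hy (pdist (x t) (y t) / 2)) as [eta2 [Heta2 H2]]; [lra|].
  exists (Rmin eta1 eta2). split; [apply Rmin_glb_lt; assumption|].
  intros s Hs Hst Heq. pose proof (Rmin_l eta1 eta2). pose proof (Rmin_r eta1 eta2).
  specialize (H1 s Hs ltac:(lra)). specialize (H2 s Hs ltac:(lra)).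
  rewrite Heq in H1. rewrite pdist_sym in H1.
  pose proof (pdist_triangle (x t) (y s) (y t)). lra.
Qed.

Lemma ex_first_capture N t0 (xE : R -> Pt) (xP : nat -> R -> Pt) :
  (forall t, t0 <= t -> traj_continuous t0 xE t) ->
  (forall j, (j < N)%nat -> forall t, t0 <= t -> traj_continuous t0 (xP j) t) ->
  (exists s, t0 <= s /\ exists j, (j < N)%nat /\ xP j s = xE s) ->
  exists Tc, first_capture N xE xP t0 Tc.
Proof.
  intros HE HP [s0 [Hs0 [j0 [Hj0 Hcap0]]]].
  set (free x :=
         t0 <= x /\ forall s, t0 <= s < x -> forall j, (j < N)%nat -> xP j s <> xE s).
  destruct (completeness free) as [Tc [Hub Hlub]].
  { exists s0. intros x [Hx Hfree]. apply Rnot_lt_le. intro Hlt.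
    exact (Hfree s0 ltac:(lra) j0 Hj0 Hcap0). }
  { exists t0. split; [lra | intros; lra]. }
  assert (HTc : t0 <= Tc) by (apply Hub; split; [lra | intros; lra]).
  assert (Hbefore : forall s, t0 <= s < Tc -> forall j, (j < N)%nat -> xP j s <> xE s).
  { intros s Hs j Hj Hcap. enough (Tc <= s) by lra.
    apply Hlub. intros x [Hx Hfree]. apply Rnot_lt_le. intro Hsx.
    exact (Hfree s ltac:(lra) j Hj Hcap). }
  exists Tc. split; [exact HTc | split; [|exact Hbefore]].
  apply NNPP. intro Hnone.
  destruct (ex_common_radius N
              (fun j eta => forall s, t0 <= s -> Rabs (s - Tc) < eta -> xP j s <> xE s))
    as [eta [Heta Hfar]].
  { intros j e e' He Hq s Hs Hst. apply Hq; [exact Hs | lra]. }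
  { intros j Hj. apply traj_apart_near; [apply HP | apply HE | ]; try assumption.
    intro Hcap. apply Hnone. exists j. split; assumption. }
  enough (Tc + eta / 2 <= Tc) by lra.
  apply Hub. split; [lra|]. intros s Hs j Hj.
  destruct (Rlt_le_dec s Tc); [apply Hbefore; [lra | exact Hj]|].
  apply Hfar; [exact Hj | lra | rewrite Rabs_pos_eq; lra].
Qed.

Lemma speed_ratio nuE ui : 0 < nuE -> nuE < ui -> 0 < nuE / ui < 1 /\ nuE / ui * ui = nuE.
Proof.
  intros. split; [split|].
  - apply Rdiv_lt_0_compat; lra.
  - apply (Rmult_lt_reg_r ui); [lra|]. unfold Rdiv. rewrite Rmult_assoc, Rinv_l; lra.
  - field. lra.
Qed.

Section Pursuers.

Variables (N : nat) (u : nat -> R) (nuE delta t0 : R) (xE : R -> Pt) (xP : nat -> R -> Pt).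
Hypotheses (HnuE : 0 < nuE) (Hdelta : 0 < delta) (Hu : forall i, (i < N)%nat -> nuE < u i).
Hypotheses (Hadm : evader_admissible nuE t0 xE)
           (Hfollow : pursuers_follow N u nuE delta t0 xE xP).

Lemma pursuer_invariant i T :
  (i < N)%nat -> t0 <= T ->
  (forall s, t0 <= s < T -> forall j, (j < N)%nat -> xP j s <> xE s) ->
  forall t, t0 <= t <= T ->
    lyap (nuE / u i) delta (xE t0) (xP i t0) (xE t) (xP i t)
      + decay_rate (nuE / u i) (u i) delta (xE t0) (xP i t0) / 2 * (t - t0) <= - delta ^ 2 / 2
    /\ 0 < radius_gap (nuE / u i) delta (xE t0) (xP i t0) (xE t) (xP i t).
Proof.
  intros Hi HT Hnc.
  destruct (speed_ratio nuE (u i) HnuE (Hu i Hi)) as [Hnu Hnuu].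
  destruct (Hfollow i Hi) as [Hcont Hder].
  apply lyap_traj_invariant; try assumption;
    [pose proof (Hu i Hi); lra | rewrite Hnuu; exact Hadm | |].
  - intros t Ht. apply Hder; [lra|]. intros s Hs j Hj. apply Hnc; [lra | exact Hj].
  - intros t Ht. apply Hnc; [exact Ht | exact Hi].
Qed.

(* Along the invariant the Lyapunov function decreases at a fixed rate, yet it stays
   above [- radiusC ^ 2] while [radius_gap > 0]: capture must happen before that. *)
Lemma capture_in_finite_time :
  (0 < N)%nat -> exists s, t0 <= s /\ exists j, (j < N)%nat /\ xP j s = xE s.
Proof.
  intro HN. apply NNPP. intro Hnone.
  set (nu := nuE / u 0%nat).
  destruct (speed_ratio nuE (u 0%nat) HnuE (Hu 0%nat HN)) as [Hnu _].
  set (M := decay_rate nu (u 0%nat) delta (xE t0) (xP 0%nat t0)).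
  set (RC := radiusC nu delta (xE t0) (xP 0%nat t0)).
  assert (HM : 0 < M)
    by (apply decay_rate_gt0; [exact Hnu | pose proof (Hu 0%nat HN); lra | exact Hdelta]).
  set (T := t0 + 2 * RC ^ 2 / M + 1).
  assert (HRC : 0 <= 2 * RC ^ 2 / M)
    by (apply Rle_mult_inv_pos; [pose proof (pow2_ge_0 RC); lra | exact HM]).
  destruct (pursuer_invariant 0%nat T HN ltac:(unfold T; lra)) with (t := T)
    as [Hlyap Hgap]; [| unfold T; lra |].
  { intros s Hs j Hj Hcap. apply Hnone. exists s. split; [lra|]. exists j. split; assumption. }
  fold nu M in Hlyap. fold nu in Hgap.
  pose proof (lyap_ge nu delta (xE t0) (xP 0%nat t0) Hnu (xE T) (xP 0%nat T) Hgap) as Hlow.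
  fold RC in Hlow.
  assert (M / 2 * (T - t0) = RC ^ 2 + M / 2) by (unfold T; field; lra).
  assert (0 < delta ^ 2) by (apply pow_lt; lra).
  lra.
Qed.

Lemma capture_inside_C xE0 xP0 :
  (0 < N)%nat -> xE t0 = xE0 -> (forall i, (i < N)%nat -> xP i t0 = xP0 i) ->
  exists Tc, first_capture N xE xP t0 Tc /\
    forall s, t0 <= s <= Tc -> in_all_C N u nuE delta xE0 xP0 (xE s).
Proof.
  intros HN HE0 HP0.
  destruct (ex_first_capture N t0 xE xP) as [Tc HTc].
  - intros t Ht. apply (lipschitz_traj_continuous nuE); [lra | exact Hadm | exact Ht].
  - intros j Hj. exact (proj1 (Hfollow j Hj)).
  - exact (capture_in_finite_time HN).
  - exists Tc. split; [exact HTc|]. intros s Hs i Hi.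
    destruct HTc as [_ [_ Hbefore]].
    destruct (speed_ratio nuE (u i) HnuE (Hu i Hi)) as [Hnu _].
    destruct (pursuer_invariant i s Hi ltac:(lra)) with (t := s) as [Hlyap Hgap];
      [intros s' Hs'; apply Hbefore; lra | lra |].
    rewrite <- HE0, <- (HP0 i Hi).
    apply (in_disc_C_of_lyap _ _ _ _ Hnu (xE s) (xP i s)); [|exact Hgap].
    assert (0 < delta ^ 2) by (apply pow_lt; lra).
    assert (0 <= decay_rate (nuE / u i) (u i) delta (xE t0) (xP i t0) / 2 * (s - t0)).
    { apply Rmult_le_pos; [|lra]. apply Rlt_le, Rdiv_lt_0_compat; [|lra].
      apply decay_rate_gt0; [exact Hnu | pose proof (Hu i Hi); lra | exact Hdelta]. }
    lra.
Qed.

End Pursuers.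

(** * Separation from the target *)

Section Separation.

Variables (N : nat) (c : nat -> Pt) (rad : nat -> R) (Tg : Pt -> Prop).
Hypothesis Hclosed : closed_plane Tg.
Hypothesis Hdisjoint :
  forall p, (forall i, (i < N)%nat -> pdist p (c i) <= rad i) -> ~ Tg p.

Lemma local_separation t : exists g : posreal,
  forall p, pdist p t < 2 * g -> Tg p -> exists i, (i < N)%nat /\ rad i + g < pdist p (c i).
Proof.
  destruct (classic (Tg t)) as [Ht|Ht].
  - assert (Hout : exists i, (i < N)%nat /\ rad i < pdist t (c i)).
    { apply NNPP. intro Hin. apply (Hdisjoint t); [|exact Ht].
      intros i Hi. apply Rnot_lt_le. intro Hlt. apply Hin. exists i. split; assumption. }
    destruct Hout as [i [Hi Hlt]].
    assert (Hg : 0 < (pdist t (c i) - rad i) / 4) by lra.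
    exists (mkposreal _ Hg). intros p Hp _. exists i. split; [exact Hi|]. simpl in *.
    pose proof (pdist_triangle t p (c i)). rewrite (pdist_sym t p) in *. lra.
  - assert (Hfar : exists eps, 0 < eps /\ forall q, Tg q -> eps <= pdist t q).
    { apply NNPP. intro Hnear. apply Ht, Hclosed. intros eps Heps.
      apply NNPP. intro Hno. apply Hnear. exists eps. split; [exact Heps|].
      intros q Hq. apply Rnot_lt_le. intro Hlt. apply Hno. exists q. split; assumption. }
    destruct Hfar as [eps [Heps Hq]].
    assert (Hg : 0 < eps / 2) by lra.
    exists (mkposreal _ Hg). intros p Hp HTp. exfalso. simpl in Hp.
    specialize (Hq p HTp). rewrite pdist_sym in Hq. lra.
Qed.

(* The gauge of [local_separation] admits a uniform lower bound on a square containing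
   every disc [pdist p (c 0) <= rad 0 + 1] (Cousin's lemma in [Compactness]). *)
Lemma uniform_separation :
  (0 < N)%nat -> exists delta0, 0 < delta0 /\ forall delta, 0 < delta < delta0 ->
    forall p, (forall i, (i < N)%nat -> pdist p (c i) <= rad i + delta) -> ~ Tg p.
Proof.
  intro HN.
  set (toPt (t : Compactness.Tn 2 R) := (fst t, fst (snd t)) : Pt).
  set (gauge t :=
         proj1_sig (constructive_indefinite_description _ (local_separation (toPt t)))).
  set (L := Rabs (rad 0%nat) + 1). set (c0 := c 0%nat).
  set (a := (fst c0 - L, (snd c0 - L, tt)) : Compactness.Tn 2 R).
  set (b := (fst c0 + L, (snd c0 + L, tt)) : Compactness.Tn 2 R).
  destruct (Compactness.compactness_value 2 a b gauge) as [d Hd].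
  exists (Rmin d 1). split; [apply Rmin_glb_lt; [apply cond_pos | lra]|].
  intros delta [Hdelta Hdelta1] p Hp HTp.
  pose proof (Rmin_l d 1). pose proof (Rmin_r d 1).
  assert (Hbox : Compactness.bounded_n 2 a b (fst p, (snd p, tt))).
  { specialize (Hp 0%nat HN). fold c0 in Hp.
    destruct (coords_le_pnorm (psub p c0)) as [H1 H2]. unfold pdist in Hp.
    unfold psub in H1, H2, Hp; simpl in H1, H2.
    pose proof (Rle_abs (rad 0%nat)).
    pose proof (Rle_abs (fst p - fst c0)). pose proof (Rle_abs (- (fst p - fst c0))).
    pose proof (Rle_abs (snd p - snd c0)). pose proof (Rle_abs (- (snd p - snd c0))).
    rewrite !Rabs_Ropp in *. unfold a, b, L; simpl. repeat split; lra. }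
  apply (Hd _ Hbox). intros [t [_ [Hclose Hdt]]].
  assert (Hpt : pdist p (toPt t) < 2 * gauge t).
  { assert (Hc : Rabs (fst p - fst (toPt t)) < gauge t /\
                 Rabs (snd p - snd (toPt t)) < gauge t)
      by (destruct t as [t1 [t2 []]]; exact (conj (proj1 Hclose) (proj1 (proj2 Hclose)))).
    unfold pdist. eapply Rle_lt_trans; [apply pnorm_le_coords|].
    change (Rabs (fst p - fst (toPt t)) + Rabs (snd p - snd (toPt t)) < 2 * gauge t). lra. }
  destruct (proj2_sig (constructive_indefinite_description _ (local_separation (toPt t)))
              p Hpt HTp) as [i [Hi Hlt]].
  fold (gauge t) in Hlt. specialize (Hp i Hi). lra.
Qed.

End Separation.

Theorem mainTheorem8 (N : nat) (u : nat -> R) (nuE t0 : R)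
    (xE0 : Pt) (xP0 : nat -> Pt) :
  (0 < N)%nat ->
  0 < nuE ->
  (forall i, (i < N)%nat -> nuE < u i) ->
  (forall i, (i < N)%nat -> xE0 <> xP0 i) ->
  (* part 1: capture in finite time at a point of the intersection of the C_i *)
  (forall delta, 0 < delta ->
     forall (xE : R -> Pt) (xP : nat -> R -> Pt),
       xE t0 = xE0 -> (forall i, (i < N)%nat -> xP i t0 = xP0 i) ->
       evader_admissible nuE t0 xE ->
       pursuers_follow N u nuE delta t0 xE xP ->
       exists Tc, first_capture N xE xP t0 Tc /\
                  in_all_C N u nuE delta xE0 xP0 (xE Tc)) /\
  (* part 2: target guarding for small delta *)
  (forall Tg : Pt -> Prop, closed_plane Tg ->
     (forall p, in_I N u nuE xE0 xP0 p -> ~ Tg p) ->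
     exists delta0, 0 < delta0 /\
       forall delta, 0 < delta < delta0 ->
       forall (xE : R -> Pt) (xP : nat -> R -> Pt),
         xE t0 = xE0 -> (forall i, (i < N)%nat -> xP i t0 = xP0 i) ->
         evader_admissible nuE t0 xE ->
         pursuers_follow N u nuE delta t0 xE xP ->
         pursuers_win N Tg xE xP t0).
Proof.
  (* The pursuers need not start away from the evader: a capture at [t0] is a
     legitimate first capture. *)
  intros HN HnuE Hu _. split.
  - intros delta Hdelta xE xP HE0 HP0 Hadm Hfollow.
    destruct (capture_inside_C N u nuE delta t0 xE xP HnuE Hdelta Hu Hadm Hfollow
                xE0 xP0 HN HE0 HP0) as [Tc [HTc Hin]].
    exists Tc. split; [exact HTc|]. apply Hin. pose proof (proj1 HTc). lra.
  - intros Tg Hclosed HI.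
    destruct (uniform_separation N (fun i => apo_center (nuE / u i) xE0 (xP0 i))
                (fun i => apo_radius (nuE / u i) xE0 (xP0 i)) Tg Hclosed HI HN)
      as [delta0 [Hdelta0 Hsep]].
    exists delta0. split; [exact Hdelta0|].
    intros delta Hdelta xE xP HE0 HP0 Hadm Hfollow.
    destruct (capture_inside_C N u nuE delta t0 xE xP HnuE (proj1 Hdelta) Hu Hadm Hfollow
                xE0 xP0 HN HE0 HP0) as [Tc [HTc Hin]].
    exists Tc. split; [exact HTc|]. intros s Hs.
    exact (Hsep delta Hdelta (xE s) (Hin s Hs)).
Qed.
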